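(* Let $d\ge2$, $\bm{\theta}=(\theta_1,\dots,\theta_d),\bm{\xi}=(\xi_1,\dots,\xi_d)\in\mathbb{R}^d$, and let $C_{\bm\theta,\bm\xi}$ be the conjugation on $H^2(\mathbb{D}^d)$ given by \[ C_{\bm\theta,\bm\xi}\Big(\sum_{\bm{k}\in\mathbb{Z}_+^d}a_{\bm{k}}z^{\bm{k}}\Big)=\exp\Big(i\sum_{j=1}^d\xi_j\Big)\sum_{\bm{k}\in\mathbb{Z}_+^d}\overline{a_{\bm{k}}}\exp\Big(-i\sum_{j=1}^dk_j\theta_j\Big)z^{\bm{k}}. \] Let $\varphi=\sum_{\bm{k}\in\mathbb{Z}^d}\varphi(\bm{k})z^{\bm{k}}\in L^\infty(\mathbb{T}^d)$. Then $T_\varphi$ is $C_{\bm\theta,\bm\xi}$-symmetric if and only if \[ \exp\Big(i\sum_{j=1}^dk_j\theta_j\Big)\varphi(\bm{k})=\varphi(-\bm{k})\qquad(\bm{k}\in\mathbb{Z}^d). \]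
   Context: A conjugation is an anti-linear, involutive, isometric map; $T$ is $C$-symmetric if $CT^*C=T$. $H^2(\mathbb{D}^d)$ is the Hardy space over the polydisc, viewed as the closed subspace of $L^2(\mathbb{T}^d)$ with orthonormal basis $\{z^{\bm{k}}\}_{\bm{k}\in\mathbb{Z}_+^d}$, $z^{\bm{k}}=z_1^{k_1}\cdots z_d^{k_d}$. For $\varphi\in L^\infty(\mathbb{T}^d)$ with Fourier coefficients $\varphi(\bm{k})$, $T_\varphi f=P_{H^2(\mathbb{D}^d)}(\varphi f)$. *)

From mathcomp Require Import all_boot all_algebra.
From mathcomp Require Import all_classical all_reals all_analysis.
From mathcomp Require Import complex.
From mathcomp Require Import finmap.
Set Implicit Arguments. Unset Strict Implicit. Unset Printing Implicit Defensive.
Import GRing.Theory Num.Theory numFieldNormedType.Exports.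
Local Open Scope ring_scope.
Local Open Scope classical_set_scope.

Definition totally {I : choiceType} : set_system {fset I} :=
  filter_from setT (fun A => [set B | (A `<=` B)%fset]).

Definition partial_sum {R : realType} {I : choiceType} (x : I -> R)
  (A : {fset I}) : R := \sum_(i <- A) x i.

Definition rsum {R : realType} {I : choiceType} (x : I -> R) : R :=
  lim (partial_sum x @ totally).

Definition csum {R : realType} {I : choiceType} (x : I -> R[i]) : R[i] :=
  (rsum (fun i => complex.Re (x i)) +i* rsum (fun i => complex.Im (x i)))%C.

Definition sqn {R : realType} (z : R[i]) : R :=
  complex.Re z ^+ 2 + complex.Im z ^+ 2.

Definition expi {R : realType} (x : R) : R[i] := (cos x +i* sin x)%C.

Definition mnat (d : nat) := {ffun 'I_d -> nat}.
Definition mint (d : nat) := {ffun 'I_d -> int}.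

Definition mint_of_nat {d : nat} (n : mnat d) : mint d := [ffun j => (n j)%:Z].
Definition msub {d : nat} (k l : mint d) : mint d := [ffun j => k j - l j].
Definition mopp {d : nat} (k : mint d) : mint d := [ffun j => - k j].

Definition mdot {R : realType} {d : nat} (k : mint d) (theta : 'I_d -> R) : R :=
  \sum_(j < d) (k j)%:~R * theta j.

(* ---------- H^2(D^d) via its orthonormal basis {z^k : k in Z_+^d} ----------
   An element f = sum_k a_k z^k of H^2(D^d) is represented by its
   coefficient family a : Z_+^d -> C, which is square summable. *)

Definition H2vec {R : realType} (d : nat) := mnat d -> R[i].

Definition in_H2 {R : realType} {d : nat} (f : @H2vec R d) : Prop :=
  exists M : R, forall J : {fset mnat d}, \sum_(k <- J) sqn (f k) <= M.

Definition inner {R : realType} {d : nat} (f g : @H2vec R d) : R[i] :=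
  csum (fun k => f k * (g k)^*%C).

Definition Cthxi {R : realType} {d : nat} (theta xi : 'I_d -> R)
  (f : @H2vec R d) : @H2vec R d :=
  fun k => expi (\sum_(j < d) xi j) * (f k)^*%C
             * expi (- mdot (mint_of_nat k) theta).

(* ---------- symbols in L^infty(T^d) and Toeplitz operators ----------
   A symbol phi in L^infty(T^d) is represented by its Fourier coefficient
   family c = (phi(k))_{k in Z^d}.  Through the Fourier (Plancherel) unitary
   L^2(T^d) ~ l^2(Z^d), multiplication by phi becomes the Laurent operator
   a |-> (sum_m c(n-m) a_m)_n, and phi is in L^infty exactly when this
   operator is bounded on l^2(Z^d) (then ||M_phi|| = ||phi||_infty). *)
Definition Linfty_coeffs {R : realType} {d : nat} (c : mint d -> R[i]) : Prop :=
  exists M : R, forall (a : mint d -> R[i]) (J K : {fset mint d}),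
    \sum_(n <- K) sqn (\sum_(m <- J) c (msub n m) * a m)
      <= M * \sum_(m <- J) sqn (a m).

(* T_phi f = P_{H^2}(phi f): its k-th coefficient (k in Z_+^d) is
   sum_{m in Z_+^d} phi(k - m) a_m *)
Definition toeplitz {R : realType} {d : nat} (c : mint d -> R[i])
  (f : @H2vec R d) : @H2vec R d :=
  fun n => csum (fun m => c (msub (mint_of_nat n) (mint_of_nat m)) * f m).

Definition is_adjoint {R : realType} {d : nat} (T S : @H2vec R d -> @H2vec R d)
  : Prop :=
  (forall g, in_H2 g -> in_H2 (S g)) /\
  (forall f g, in_H2 f -> in_H2 g -> inner (T f) g = inner f (S g)).

Definition C_symmetric {R : realType} {d : nat}
  (Cj T : @H2vec R d -> @H2vec R d) : Prop :=
  exists Tstar, is_adjoint T Tstar /\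
    (forall f, in_H2 f -> Cj (Tstar (Cj f)) = T f).

(* In the basis (z^k), T_phi has the matrix K(n, m) = phi(n - m) and C_{theta,xi}
   conjugates coefficients up to unimodular factors, so C T^* C has the matrix
   exp(i (m - n).theta) phi(m - n).  Comparing matrix entries, and using that every
   k in Z^d is a difference n - m of two multi-indices in Z_+^d, gives the necessity
   of exp(i k.theta) phi(k) = phi(-k).  Conversely, under this relation the transpose
   of K is K conjugated by diagonal unimodular matrices, hence bounded like K, and
   the candidate adjoint C T_phi C has the matrix of the transpose; the exchange of
   summations in <T_phi f, g> = <f, C T_phi C g> is justified by truncating g to
   finite sets, the error being small by Cauchy-Schwarz. *)

From mathcomp Require Import all_boot all_algebra.
From mathcomp Require Import all_classical all_reals all_analysis.
From mathcomp Require Import complex.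
From mathcomp Require Import finmap.
From mathcomp Require Import ring lra.
Import order.Order.TTheory GRing.Theory Num.Theory numFieldNormedType.Exports.
Set Implicit Arguments. Unset Strict Implicit. Unset Printing Implicit Defensive.
Local Open Scope ring_scope.
Local Open Scope classical_set_scope.

Instance totally_proper {I : choiceType} : ProperFilter (@totally I).
Proof.
apply: filter_from_proper; last by move=> A _; exists A; rewrite /= fsubset_refl.
apply: filter_fromT_filter; first by exists fset0.
by move=> A B; exists (A `|` B)%fset => P /=; rewrite fsubUset => /andP[].
Qed.

Section RealSums.
Variables (R : realType) (I : choiceType).
Implicit Types (x y : I -> R) (A B : {fset I}).

Lemma near_totally {P : {fset I} -> Prop} A :
  (forall B, (A `<=` B)%fset -> P B) -> \forall B \near totally, P B.
Proof. by move=> AP; exists A => // B /AP. Qed.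

Lemma le_lim_totally (f : {fset I} -> R) l M :
  f @ totally --> l -> (forall B, f B <= M) -> l <= M.
Proof.
move=> fl fM; have := @limr_le _ totally _ R M f.
rewrite (norm_cvg_lim fl); apply; first exact: fl.
by apply: (near_totally (A := fset0)) => B _; exact: fM.
Qed.

Lemma ler_sum_fsubset y A B : (A `<=` B)%fset -> (forall i, 0 <= y i) ->
  \sum_(i <- A) y i <= \sum_(i <- B) y i.
Proof.
move=> AB y_ge0.
have -> : \sum_(i <- A) y i = \sum_(i <- A) (if i \in A then y i else 0).
  by rewrite big_seq_cond [RHS]big_seq_cond; apply: eq_bigr => i /andP[->].
rewrite (big_fset_incl _ AB); last by move=> i _ /negbTE ->.
by apply: ler_sum => i _; case: ifP.
Qed.

Definition abs_summable x := exists M, forall A, \sum_(i <- A) `|x i| <= M.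

Lemma ge0_partial_sum_cvg y M : (forall i, 0 <= y i) ->
  (forall A, \sum_(i <- A) y i <= M) -> exists l : R, partial_sum y @ totally --> l.
Proof.
move=> y_ge0 yM; set E := range (partial_sum y).
have supE : has_sup E.
  split; first by exists (partial_sum y fset0), fset0.
  by exists M => _ [A _ <-]; exact: yM.
exists (sup E); apply/cvgrPdist_le => e e_gt0.
have [_ [A0 _ <-] A0_near] := sup_adherent e_gt0 supE.
apply: (near_totally (A := A0)) => B A0B.
have B_le : partial_sum y B <= sup E by apply: sup_upper_bound => //; exists B.
have A0_le : partial_sum y A0 <= partial_sum y B by exact: ler_sum_fsubset.
rewrite ger0_norm ?subr_ge0 //; lra.
Qed.

(* Split [x] as [(|x| + x) - |x|], a difference of nonnegative families. *)
Lemma abs_summable_cvg x : abs_summable x -> partial_sum x @ totally --> rsum x.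
Proof.
case=> M xM.
have [l1 l1P] : exists l : R, partial_sum (fun i => `|x i| + x i) @ totally --> l.
  apply: (@ge0_partial_sum_cvg _ (M + M)) => [i|A].
    by rewrite -lerBlDr sub0r -normrN ler_norm.
  by rewrite big_split lerD // (le_trans _ (xM A)) // ler_sum // => i _; exact: ler_norm.
have [l2 l2P] : exists l : R, partial_sum (fun i => `|x i|) @ totally --> l.
  exact: (@ge0_partial_sum_cvg _ M).
have xcvg : partial_sum x @ totally --> l1 - l2.
  have -> : partial_sum x = partial_sum (fun i => `|x i| + x i) - partial_sum (fun i => `|x i|).
    by apply/funext => A; rewrite /partial_sum !fctE big_split /= addrAC subrr add0r.
  exact: cvgB.
by rewrite /rsum (cvg_lim _ xcvg).
Qed.

Lemma rsumE x l : partial_sum x @ totally --> l -> rsum x = l.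
Proof. by move=> xl; rewrite /rsum (cvg_lim _ xl). Qed.

Lemma abs_summableD x y : abs_summable x -> abs_summable y -> abs_summable (x \+ y).
Proof.
move=> [M1 xM1] [M2 yM2]; exists (M1 + M2) => A.
apply: le_trans (lerD (xM1 A) (yM2 A)); rewrite -big_split /=.
by apply: ler_sum => i _; exact: ler_normD.
Qed.

Lemma abs_summableB x y : abs_summable x -> abs_summable y -> abs_summable (x \- y).
Proof.
move=> [M1 xM1] [M2 yM2]; exists (M1 + M2) => A.
apply: le_trans (lerD (xM1 A) (yM2 A)); rewrite -big_split /=.
by apply: ler_sum => i _; exact: ler_normB.
Qed.

Lemma abs_summableMl a x : abs_summable x -> abs_summable (fun i => a * x i).
Proof.
move=> [M xM]; exists (`|a| * M) => A.
by under eq_bigr do rewrite normrM; rewrite -mulr_sumr ler_wpM2l.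
Qed.

Lemma rsumD x y : abs_summable x -> abs_summable y -> rsum (x \+ y) = rsum x + rsum y.
Proof.
move=> xS yS; apply: rsumE.
have -> : partial_sum (x \+ y) = partial_sum x + partial_sum y.
  by apply/funext => A; rewrite /partial_sum big_split.
by apply: cvgD; exact: abs_summable_cvg.
Qed.

Lemma rsumB x y : abs_summable x -> abs_summable y -> rsum (x \- y) = rsum x - rsum y.
Proof.
move=> xS yS; apply: rsumE.
have -> : partial_sum (x \- y) = partial_sum x - partial_sum y.
  by apply/funext => A; rewrite /partial_sum !fctE sumrB.
by apply: cvgB; exact: abs_summable_cvg.
Qed.

Lemma rsumMl a x : abs_summable x -> rsum (fun i => a * x i) = a * rsum x.
Proof.
move=> xS; apply: rsumE.
have -> : partial_sum (fun i => a * x i) = (fun A => a * partial_sum x A).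
  by apply/funext => A; rewrite /partial_sum mulr_sumr.
by apply: cvgMl_tmp; exact: abs_summable_cvg.
Qed.

Lemma ler_norm_rsum x M : (forall A, \sum_(i <- A) `|x i| <= M) -> `|rsum x| <= M.
Proof.
move=> xM; have /cvg_norm xcvg := abs_summable_cvg (ex_intro _ M xM).
by apply: le_lim_totally xcvg _ => A; exact: le_trans (ler_norm_sum _ _ _) (xM A).
Qed.

Lemma rsum_finsupp x A0 : (forall i, i \notin A0 -> x i = 0) ->
  rsum x = \sum_(i <- A0) x i.
Proof.
move=> x0; apply: rsumE; apply: cvg_near_cst.
apply: (near_totally (A := A0)) => B A0B.
by rewrite /partial_sum (big_fset_incl _ A0B) // => i _ /x0.
Qed.

Lemma cvg_big_totally (T : Type) (s : seq T) (F : T -> {fset I} -> R) (l : T -> R) :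
  (forall t, F t @ totally --> l t) ->
  (fun B => \sum_(t <- s) F t B) @ totally --> \sum_(t <- s) l t.
Proof.
move=> Fl; elim: s => [|t s IHs].
  by rewrite big_nil; under eq_fun do rewrite big_nil; exact: cvg_cst.
by rewrite big_cons; under eq_fun do rewrite big_cons; exact: cvgD.
Qed.

End RealSums.

Section ComplexLemmas.
Variable R : realType.
Local Notation C := R[i].
Local Open Scope complex_scope.
Implicit Types (z w : C) (a : R).

Lemma complexP z w : complex.Re z = complex.Re w -> complex.Im z = complex.Im w -> z = w.
Proof. by case: z => ? ?; case: w => ? ? /= -> ->. Qed.

Lemma cReD z w : complex.Re (z + w) = complex.Re z + complex.Re w.
Proof. by case: z; case: w. Qed.

Lemma cImD z w : complex.Im (z + w) = complex.Im z + complex.Im w.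
Proof. by case: z; case: w. Qed.

Lemma cReN z : complex.Re (- z) = - complex.Re z.
Proof. by case: z. Qed.

Lemma cImN z : complex.Im (- z) = - complex.Im z.
Proof. by case: z. Qed.

Lemma cReM z w :
  complex.Re (z * w) = complex.Re z * complex.Re w - complex.Im z * complex.Im w.
Proof. by case: z; case: w. Qed.

Lemma cImM z w :
  complex.Im (z * w) = complex.Re z * complex.Im w + complex.Im z * complex.Re w.
Proof. by case: z => a b; case: w => c e /=; ring. Qed.

Lemma cRe_sum (T : Type) (s : seq T) (F : T -> C) :
  complex.Re (\sum_(t <- s) F t) = \sum_(t <- s) complex.Re (F t).
Proof. exact: (big_morph _ cReD). Qed.

Lemma cIm_sum (T : Type) (s : seq T) (F : T -> C) :
  complex.Im (\sum_(t <- s) F t) = \sum_(t <- s) complex.Im (F t).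
Proof. exact: (big_morph _ cImD). Qed.

Lemma sqn_ge0 z : 0 <= sqn z.
Proof. by rewrite /sqn addr_ge0 ?sqr_ge0. Qed.

Lemma sqn0 : sqn (0 : C) = 0.
Proof. by rewrite /sqn expr0n /= addr0. Qed.

Lemma sqn1 : sqn (1 : C) = 1.
Proof. by rewrite /sqn expr1n expr0n /= addr0. Qed.

Lemma sqnM z w : sqn (z * w) = sqn z * sqn w.
Proof. by case: z => a b; case: w => c e; rewrite /sqn /=; ring. Qed.

Lemma sqnJ z : sqn (conjc z) = sqn z.
Proof. by case: z => a b; rewrite /sqn /= sqrrN. Qed.

Lemma sqn_expi a : sqn (expi a) = 1.
Proof. exact: cos2Dsin2. Qed.

Lemma expiD a b : expi (a + b) = expi a * expi b.
Proof. by apply: complexP; rewrite /= ?cosD ?sinD //; ring. Qed.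

Lemma conjcM z w : conjc (z * w) = conjc z * conjc w.
Proof. exact: rmorphM. Qed.

Lemma conj_expi a : conjc (expi a) = expi (- a).
Proof. by rewrite /expi cosN sinN. Qed.

Lemma expiNr a : expi a * expi (- a) = 1.
Proof. by rewrite -expiD subrr /expi cos0 sin0. Qed.

(* Weighted AM-GM: [|Re (z w)| <= |z| |w| <= (t |z|^2 + t^-1 |w|^2) / 2]. *)
Lemma norm_cRe_mul_le z w t : 0 < t ->
  `|complex.Re (z * w)| <= (t * sqn z + t^-1 * sqn w) / 2.
Proof.
move=> t_gt0.
have ReM_sqn : complex.Re (z * w) ^+ 2 <= sqn z * sqn w.
  by rewrite -sqnM /sqn lerDl sqr_ge0.
have sqn_le : sqn z * sqn w <= ((t * sqn z + t^-1 * sqn w) / 2) ^+ 2.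
  have : 0 <= (t * sqn z - t^-1 * sqn w) ^+ 2 by exact: sqr_ge0.
  have : t * t^-1 = 1 by rewrite divff ?gt_eqF.
  move: (sqn z) (sqn w) t^-1 => p q s ts; nra.
have bound_ge0 : 0 <= (t * sqn z + t^-1 * sqn w) / 2.
  by rewrite divr_ge0 // addr_ge0 // mulr_ge0 ?sqn_ge0 ?invr_ge0 // ltW.
rewrite -(ger0_norm bound_ge0) -ler_sqr ?nnegrE // !real_normK ?num_real //.
exact: le_trans ReM_sqn sqn_le.
Qed.

Lemma norm_cIm_mul_le z w t : 0 < t ->
  `|complex.Im (z * w)| <= (t * sqn z + t^-1 * sqn w) / 2.
Proof.
move=> t_gt0; have := norm_cRe_mul_le z (w * - 'i) t_gt0.
have -> : sqn (w * - 'i) = sqn w.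
  by rewrite sqnM /sqn /= oppr0 expr0n sqrrN expr1n add0r mulr1.
have -> // : complex.Re (z * (w * - 'i)) = complex.Im (z * w).
by case: z => a b; case: w => c e /=; ring.
Qed.

End ComplexLemmas.

Section ComplexSums.
Variables (R : realType) (I : choiceType).
Local Notation C := R[i].
Implicit Types (x y : I -> C) (A : {fset I}).

Definition csummable x :=
  abs_summable (fun i => complex.Re (x i)) /\ abs_summable (fun i => complex.Im (x i)).

Lemma csummableD x y : csummable x -> csummable y -> csummable (x \+ y).
Proof.
move=> [xRe xIm] [yRe yIm]; split.
  by under eq_fun do rewrite cReD; exact: abs_summableD.
by under eq_fun do rewrite cImD; exact: abs_summableD.
Qed.

Lemma csummableMl a x : csummable x -> csummable (fun i => a * x i).
Proof.
move=> [xRe xIm]; split.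
  by under eq_fun do rewrite cReM; apply: abs_summableB; exact: abs_summableMl.
by under eq_fun do rewrite cImM; apply: abs_summableD; exact: abs_summableMl.
Qed.

Lemma csummable_finsupp x A0 : (forall i, i \notin A0 -> x i = 0) -> csummable x.
Proof.
move=> x0; have fin (y : I -> R) : (forall i, i \notin A0 -> y i = 0) -> abs_summable y.
  move=> y0; exists (\sum_(i <- A0) `|y i|) => A.
  apply: le_trans (ler_sum_fsubset (fsubsetUl A A0) _) _ => //.
  by rewrite -(big_fset_incl _ (fsubsetUr A A0)) // => i _ /y0 ->; rewrite normr0.
by split; apply: fin => i /x0 ->.
Qed.

Lemma csummable_big (T : Type) (s : seq T) (F : T -> I -> C) :
  (forall t, csummable (F t)) -> csummable (fun i => \sum_(t <- s) F t i).
Proof.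
move=> FS; elim: s => [|t s IHs].
  by under eq_fun do rewrite big_nil; apply: (csummable_finsupp (A0 := fset0)).
by under eq_fun do rewrite big_cons; exact: csummableD.
Qed.

Lemma csumD x y : csummable x -> csummable y -> csum (x \+ y) = csum x + csum y.
Proof.
move=> [xRe xIm] [yRe yIm]; apply: complexP; rewrite /csum /=.
  by under eq_fun do rewrite cReD; rewrite (rsumD xRe yRe).
by under eq_fun do rewrite cImD; rewrite (rsumD xIm yIm).
Qed.

Lemma csumMl a x : csummable x -> csum (fun i => a * x i) = a * csum x.
Proof.
move=> [xRe xIm]; apply: complexP; rewrite /csum /=.
  under eq_fun do rewrite cReM.
  by rewrite rsumB ?rsumMl //; [case: a | exact: abs_summableMl..].
under eq_fun do rewrite cImM.
by rewrite rsumD ?rsumMl //; [case: a | exact: abs_summableMl..].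
Qed.

Lemma csumMr a x : csummable x -> csum (fun i => x i * a) = csum x * a.
Proof. by move=> xS; under eq_fun do rewrite mulrC; rewrite csumMl // mulrC. Qed.

Lemma csumB x y : csummable x -> csummable y -> csum (x \- y) = csum x - csum y.
Proof.
move=> xS yS; have NyS := csummableMl (-1) yS.
have -> : x \- y = x \+ (fun i => -1 * y i) by apply/funext => i; rewrite /= mulN1r.
by rewrite csumD // csumMl // mulN1r.
Qed.

Lemma csum_finsupp x A0 : (forall i, i \notin A0 -> x i = 0) ->
  csum x = \sum_(i <- A0) x i.
Proof.
move=> x0; apply: complexP; rewrite ?cRe_sum ?cIm_sum /csum /=.
  by apply: rsum_finsupp => i /x0 ->.
by apply: rsum_finsupp => i /x0 ->.
Qed.

Lemma csum_fset1 x n : (forall i, i != n -> x i = 0) -> csum x = x n.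
Proof.
move=> x0; rewrite (csum_finsupp (A0 := [fset n]%fset)) ?big_seq_fset1 // => i.
by rewrite in_fset1; exact: x0.
Qed.

Lemma csum_big (T : Type) (s : seq T) (F : T -> I -> C) :
  (forall t, csummable (F t)) ->
  csum (fun i => \sum_(t <- s) F t i) = \sum_(t <- s) csum (F t).
Proof.
move=> FS; elim: s => [|t s IHs].
  by under eq_fun do rewrite big_nil; rewrite big_nil (csum_finsupp (A0 := fset0)) ?big_nil.
under eq_fun do rewrite big_cons.
by rewrite (csumD (FS t) (csummable_big s FS)) big_cons IHs.
Qed.

Lemma csum_cvg x : csummable x ->
  (fun A => complex.Re (\sum_(i <- A) x i)) @ totally --> complex.Re (csum x) /\
  (fun A => complex.Im (\sum_(i <- A) x i)) @ totally --> complex.Im (csum x).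
Proof.
move=> [xRe xIm]; split.
  by under eq_fun do rewrite cRe_sum; exact: abs_summable_cvg.
by under eq_fun do rewrite cIm_sum; exact: abs_summable_cvg.
Qed.

Lemma csum_eq x z :
  (forall e, 0 < e -> \forall A \near totally,
     `|complex.Re (z - \sum_(i <- (A : {fset I})) x i)| <= e /\
     `|complex.Im (z - \sum_(i <- A) x i)| <= e) ->
  csum x = z.
Proof.
move=> near_z; apply: complexP; apply: rsumE; apply/cvgrPdist_le => e /near_z.
  by apply: filterS => A [+ _]; rewrite cReD cReN cRe_sum.
by apply: filterS => A [_ +]; rewrite cImD cImN cIm_sum.
Qed.

End ComplexSums.

Section SquareSummable.
Variables (R : realType) (I : choiceType).
Local Notation C := R[i].
Implicit Types (u v G : I -> C) (A L : {fset I}).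

Definition l2_bounded u M := forall A, \sum_(i <- A) sqn (u i) <= M.

Lemma l2_bounded_ge0 u M : l2_bounded u M -> 0 <= M.
Proof. by move=> /(_ fset0); rewrite big_nil. Qed.

Lemma l2_bounded_le u M M' : M <= M' -> l2_bounded u M -> l2_bounded u M'.
Proof. by move=> MM' uM A; exact: le_trans (uM A) MM'. Qed.

Lemma sum_norm_ReIm_mul_le u v Mu Mv t : l2_bounded u Mu -> l2_bounded v Mv -> 0 < t ->
  forall A,
    \sum_(i <- A) `|complex.Re (u i * v i)| <= (t * Mu + t^-1 * Mv) / 2 /\
    \sum_(i <- A) `|complex.Im (u i * v i)| <= (t * Mu + t^-1 * Mv) / 2.
Proof.
move=> uMu vMv t_gt0 A.
have AMGM : \sum_(i <- A) (t * sqn (u i) + t^-1 * sqn (v i)) / 2 <= (t * Mu + t^-1 * Mv) / 2.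
  rewrite -mulr_suml big_split /= -!mulr_sumr ler_pM2r // lerD // ler_pM2l ?invr_gt0 //.
split; apply: le_trans AMGM; apply: ler_sum => i _.
  exact: norm_cRe_mul_le.
exact: norm_cIm_mul_le.
Qed.

Lemma csummable_l2 u v Mu Mv : l2_bounded u Mu -> l2_bounded v Mv ->
  csummable (fun i => u i * v i).
Proof.
move=> uMu vMv; have bound := sum_norm_ReIm_mul_le uMu vMv ltr01.
by split; exists ((1 * Mu + 1^-1 * Mv) / 2) => A; case: (bound A).
Qed.

Lemma csum_mul_l2_small u Mu e : l2_bounded u Mu -> 0 < e ->
  exists2 delta, 0 < delta & forall v, l2_bounded v delta ->
    `|complex.Re (csum (fun i => u i * v i))| <= e /\
    `|complex.Im (csum (fun i => u i * v i))| <= e.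
Proof.
move=> uMu e_gt0; have Mu_ge0 := l2_bounded_ge0 uMu.
pose t := e / (Mu + 1); have t_gt0 : 0 < t by rewrite divr_gt0 // ltr_wpDl.
(* With [delta = e t], the two halves of [(t Mu + t^-1 delta) / 2] are both at most [e]. *)
exists (e * t) => [|v vMv]; first exact: mulr_gt0.
have bound : (t * Mu + t^-1 * (e * t)) / 2 <= e.
  have tMu : t * Mu <= e.
    by rewrite mulrAC ler_pdivrMr ?ltr_wpDl // ler_pM2l // lerDl.
  by rewrite mulrCA mulVf ?gt_eqF // mulr1 ler_pdivrMr // mulr_natr mulr2n lerD.
have sums := sum_norm_ReIm_mul_le uMu vMv t_gt0.
by rewrite /csum /=; split; apply: le_trans bound; apply: ler_norm_rsum => A; case: (sums A).
Qed.

Lemma l2_bounded_conj u M : l2_bounded u M -> l2_bounded (fun i => conjc (u i)) M.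
Proof. by move=> uM A; under eq_bigr do rewrite sqnJ; exact: uM. Qed.

Definition ev n : I -> C := fun k => (k == n)%:R.

Lemma l2_bounded_ev n : l2_bounded (ev n) 1.
Proof.
move=> A; apply: le_trans (ler_sum_fsubset (fsubsetUl A [fset n]%fset) _) _.
  by move=> i; exact: sqn_ge0.
rewrite -(big_fset_incl _ (fsubsetUr A [fset n]%fset)) ?big_seq_fset1 /ev ?eqxx ?sqn1 //.
by move=> i _; rewrite in_fset1 => /negbTE ->; rewrite sqn0.
Qed.

Definition cutoff L G n := if n \in L then 0 else G n.

Lemma l2_bounded_cutoff G M L : l2_bounded G M -> l2_bounded (cutoff L G) M.
Proof.
move=> GM A; apply: le_trans (GM A); apply: ler_sum => n _; rewrite /cutoff.
by case: ifP => // _; rewrite sqn0 sqn_ge0.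
Qed.

Lemma l2_cutoff_small G M e : l2_bounded G M -> 0 < e ->
  exists L0, forall L, (L0 `<=` L)%fset -> l2_bounded (cutoff L G) e.
Proof.
move=> GM e_gt0; set S := partial_sum (fun n => sqn (G n)).
have supS : has_sup (range S).
  split; first by exists (S fset0), fset0.
  by exists M => _ [A _ <-]; exact: GM.
have [_ [L0 _ <-] L0_near] := sup_adherent e_gt0 supS.
exists L0 => L L0L A.
have AL_le : S (A `|` L)%fset <= sup (range S).
  by apply: sup_upper_bound => //; exists (A `|` L)%fset.
have L0L_le : S L0 <= S L by apply: ler_sum_fsubset => // n; exact: sqn_ge0.
have A_le : \sum_(n <- A) sqn (cutoff L G n) <= \sum_(n <- (A `|` L)%fset) sqn (cutoff L G n).
  by apply: ler_sum_fsubset; [exact: fsubsetUl | move=> n; exact: sqn_ge0].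
have AL_split : S (A `|` L)%fset = \sum_(n <- (A `|` L)%fset) sqn (cutoff L G n) + S L.
  have -> : S L = \sum_(n <- (A `|` L)%fset) (if n \in L then sqn (G n) else 0).
    rewrite /S /partial_sum -(big_fset_incl _ (fsubsetUr A L)); last by move=> n _ /negbTE ->.
    by rewrite big_seq_cond [RHS]big_seq_cond; apply: eq_bigr => n /andP[->].
  rewrite /S /partial_sum -big_split /=; apply: eq_bigr => n _; rewrite /cutoff.
  by case: ifP; rewrite ?sqn0 ?add0r ?addr0.
rewrite /S /partial_sum in AL_le L0L_le AL_split L0_near; lra.
Qed.

End SquareSummable.

Arguments ev {R I} n.
Arguments l2_bounded_ev {R I} n.

Section Kernels.
Variables (R : realType) (I : choiceType).
Local Notation C := R[i].
Implicit Types (K : I -> I -> C) (f G a : I -> C) (J L : {fset I}).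

Definition kapp K f n := csum (fun m => K n m * f m).

Definition ktr K : I -> I -> C := fun m n => K n m.

(* [K] is the matrix of an operator of norm at most [sqrt M] on [l^2(I)]. *)
Definition kbounded K M := 0 <= M /\ forall J L a,
  \sum_(n <- L) sqn (\sum_(m <- J) K n m * a m) <= M * \sum_(m <- J) sqn (a m).

Lemma kbounded_col K M m : kbounded K M -> l2_bounded (fun n => K n m) M.
Proof.
move=> [_ KM] L; have := KM [fset m]%fset L (fun=> 1).
by rewrite big_seq_fset1 sqn1 mulr1; under eq_bigr do rewrite big_seq_fset1 mulr1.
Qed.

Lemma kbounded_twist K M u v : kbounded K M ->
  (forall n, sqn (u n) = 1) -> (forall m, sqn (v m) = 1) ->
  kbounded (fun n m => u n * K n m * v m) M.
Proof.
move=> [M_ge0 KM] u1 v1; split=> // J L a.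
have -> : \sum_(n <- L) sqn (\sum_(m <- J) u n * K n m * v m * a m)
        = \sum_(n <- L) sqn (\sum_(m <- J) K n m * (v m * a m)).
  apply: eq_bigr => n _; rewrite -[RHS]mul1r -(u1 n) -sqnM mulr_sumr.
  by congr sqn; apply: eq_bigr => m _; rewrite !mulrA.
have -> : \sum_(m <- J) sqn (a m) = \sum_(m <- J) sqn (v m * a m).
  by apply: eq_bigr => m _; rewrite sqnM v1 mul1r.
exact: KM.
Qed.

Lemma kapp_ev K m n : kapp K (ev m) n = K n m.
Proof.
rewrite /kapp (csum_fset1 (n := m)) /ev ?eqxx ?mulr1 // => k /negbTE ->.
by rewrite mulr0.
Qed.

Section BoundedKernel.
Variables (K : I -> I -> C) (M M' : R).
Hypotheses (KM : kbounded K M) (KtM' : kbounded (ktr K) M').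

Lemma kapp_summable f Mf n : l2_bounded f Mf -> csummable (fun m => K n m * f m).
Proof. exact: csummable_l2 (kbounded_col n KtM'). Qed.

Lemma kapp_l2 f Mf : l2_bounded f Mf -> l2_bounded (kapp K f) (M * Mf).
Proof.
move=> fMf L.
pose F n J := complex.Re (\sum_(m <- J) K n m * f m) ^+ 2
            + complex.Im (\sum_(m <- J) K n m * f m) ^+ 2.
have Fcvg : (fun J => \sum_(n <- L) F n J) @ totally --> \sum_(n <- L) sqn (kapp K f n).
  apply: cvg_big_totally => n.
  have [ReP ImP] := csum_cvg (kapp_summable n fMf).
  by rewrite /F /sqn !expr2; apply: cvgD; apply: cvgM.
apply: (le_lim_totally Fcvg) => J; apply: le_trans (KM.2 J L f) _.
by rewrite ler_wpM2l ?KM.1.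
Qed.

Lemma kapp_cutoff G MG L n : l2_bounded G MG ->
  kapp K G n = kapp K (cutoff L G) n + \sum_(m <- L) K n m * G m.
Proof.
move=> GMG.
have -> : \sum_(m <- L) K n m * G m = csum (fun m => K n m * (if m \in L then G m else 0)).
  rewrite (csum_finsupp (A0 := L)); last by move=> m /negbTE ->; rewrite mulr0.
  by rewrite big_seq_cond [RHS]big_seq_cond; apply: eq_bigr => m /andP[->].
rewrite /kapp -csumD.
- by congr csum; apply/funext => m; rewrite /cutoff /=; case: ifP; rewrite mulr0 ?add0r ?addr0.
- exact: kapp_summable (l2_bounded_cutoff L GMG).
- by apply: (csummable_finsupp (A0 := L)) => m /negbTE ->; rewrite mulr0.
Qed.

Lemma kapp_adjoint_fin f Mf G L : l2_bounded f Mf ->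
  \sum_(n <- L) kapp K f n * G n = csum (fun m => f m * \sum_(n <- L) K n m * G n).
Proof.
move=> fMf; have GKfS n := csummableMl (G n) (kapp_summable n fMf).
transitivity (\sum_(n <- L) csum (fun m => G n * (K n m * f m))).
  by apply: eq_bigr => n _; rewrite mulrC /kapp csumMl //; exact: kapp_summable.
rewrite -csum_big //; congr csum; apply/funext => m; rewrite mulr_sumr.
by apply: eq_bigr => n _; ring.
Qed.

End BoundedKernel.

Lemma kapp_adjoint_defect K M M' f Mf G MG L :
  kbounded K M -> kbounded (ktr K) M' -> l2_bounded f Mf -> l2_bounded G MG ->
  csum (fun m => f m * kapp (ktr K) G m) - \sum_(n <- L) kapp K f n * G n
  = csum (fun m => f m * kapp (ktr K) (cutoff L G) m).
Proof.
move=> KM KtM' fMf GMG.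
have KtGS := csummable_l2 fMf (kapp_l2 KtM' KM GMG).
have KtcutS := csummable_l2 fMf (kapp_l2 KtM' KM (l2_bounded_cutoff L GMG)).
apply/eqP; rewrite subr_eq addrC -subr_eq; apply/eqP.
rewrite -csumB // (kapp_adjoint_fin KtM' G L fMf); congr csum; apply/funext => m /=.
by rewrite (kapp_cutoff KM L m GMG); ring.
Qed.

Lemma kapp_adjoint K M M' f Mf G MG :
  kbounded K M -> kbounded (ktr K) M' -> l2_bounded f Mf -> l2_bounded G MG ->
  csum (fun n => kapp K f n * G n) = csum (fun m => f m * kapp (ktr K) G m).
Proof.
move=> KM KtM' fMf GMG; apply: csum_eq => e e_gt0.
have [delta delta_gt0 small] := csum_mul_l2_small fMf e_gt0.
have M'1_gt0 : 0 < M' + 1 by rewrite ltr_wpDl ?KtM'.1.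
have [L0 tail] := l2_cutoff_small GMG (divr_gt0 delta_gt0 M'1_gt0).
apply: (near_totally (A := L0)) => L /tail cutM.
rewrite (kapp_adjoint_defect L KM KtM' fMf GMG); apply: small.
apply: l2_bounded_le (kapp_l2 KtM' KM cutM).
by rewrite mulrCA ger_pMr // ler_pdivrMr // mul1r lerDl.
Qed.

End Kernels.

Section Polydisc.
Variables (R : realType) (d : nat).
Local Notation C := R[i].
Local Notation I := (mnat d).
Implicit Types (theta xi : 'I_d -> R) (c : mint d -> C) (f g h : @H2vec R d).

Lemma mint_of_nat_inj : injective (@mint_of_nat d).
Proof. by move=> p q /ffunP pq; apply/ffunP => j; have := pq j; rewrite !ffunE => -[]. Qed.

Lemma msub_nat_surj (k : mint d) :
  exists p q : I, msub (mint_of_nat p) (mint_of_nat q) = k.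
Proof.
exists [ffun j => if 0 <= k j then `|k j|%N else 0%N].
exists [ffun j => if 0 <= k j then 0%N else `|k j|%N].
apply/ffunP => j; rewrite !ffunE; case: ifP => k_ge0; first by rewrite subr0 gez0_abs.
by rewrite sub0r ltz0_abs ?opprK // ltNge k_ge0.
Qed.

Lemma mopp_msub (k l : mint d) : mopp (msub k l) = msub l k.
Proof. by apply/ffunP => j; rewrite !ffunE opprB. Qed.

Lemma mdotB (k l : mint d) theta : mdot (msub k l) theta = mdot k theta - mdot l theta.
Proof. by rewrite /mdot -sumrB; apply: eq_bigr => j _; rewrite ffunE intrB mulrBl. Qed.

Definition toeplitz_kernel c (n m : I) : C := c (msub (mint_of_nat n) (mint_of_nat m)).

Lemma toeplitz_kapp c : toeplitz c = kapp (toeplitz_kernel c).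
Proof. by []. Qed.

Lemma Linfty_kbounded c : Linfty_coeffs c -> exists M, kbounded (toeplitz_kernel c) M.
Proof.
move=> [M cM]; exists M; split.
  have := cM (fun=> 1) [fset [ffun=> 0]]%fset fset0.
  by rewrite big_nil big_seq_fset1 sqn1 mulr1.
move=> J L a; pose toN (k : mint d) : I := [ffun j => `|k j|%N].
have toNK n : toN (mint_of_nat n) = n by apply/ffunP => j; rewrite !ffunE.
have imE (F : mint d -> C) (A : {fset I}) :
    \sum_(k <- [fset mint_of_nat m | m in A]%fset) F k = \sum_(m <- A) F (mint_of_nat m).
  by rewrite big_imfset // => p q _ _ /mint_of_nat_inj.
have := cM (a \o toN) [fset mint_of_nat m | m in J]%fset [fset mint_of_nat n | n in L]%fset.
rewrite big_imfset /=; last by move=> p q _ _ /mint_of_nat_inj.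
rewrite [in X in _ <= _ * X]big_imfset /=; last by move=> p q _ _ /mint_of_nat_inj.
under eq_bigr do rewrite imE.
under eq_bigr do under eq_bigr do rewrite toNK.
by under [in X in _ <= _ * X]eq_bigr do rewrite toNK.
Qed.

Definition phase_symmetric theta c := forall k, expi (mdot k theta) * c k = c (mopp k).

Section Symbol.
Variables (theta : 'I_d -> R) (c : mint d -> C).
Hypothesis c_sym : phase_symmetric theta c.

Lemma toeplitz_kernel_tr :
  ktr (toeplitz_kernel c) = fun m n => expi (mdot (mint_of_nat m) theta)
    * toeplitz_kernel c m n * expi (- mdot (mint_of_nat n) theta).
Proof.
apply/funext => m; apply/funext => n.
by rewrite /ktr /toeplitz_kernel -mopp_msub -c_sym mdotB expiD; ring.
Qed.

Lemma toeplitz_kbounded : Linfty_coeffs c ->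
  exists M, kbounded (toeplitz_kernel c) M /\ kbounded (ktr (toeplitz_kernel c)) M.
Proof.
move=> /Linfty_kbounded [M KM]; exists M; split => //.
by rewrite toeplitz_kernel_tr; apply: kbounded_twist => // n; exact: sqn_expi.
Qed.

End Symbol.

Section Conjugation.
Variables (theta xi : 'I_d -> R).
Local Notation Cj := (Cthxi theta xi).
Local Notation alpha := (\sum_(j < d) xi j).

Lemma conj_Cthxi h k :
  conjc (Cj h k) = expi (- alpha) * h k * expi (mdot (mint_of_nat k) theta).
Proof. by rewrite /Cthxi !conjcM conjcK !conj_expi opprK. Qed.

Lemma Cthxi_invol : involutive Cj.
Proof.
move=> h; apply/funext => k; rewrite {1}/Cthxi conj_Cthxi.
rewrite -[RHS]mul1r -(expiNr alpha) -[RHS]mulr1 -(expiNr (mdot (mint_of_nat k) theta)).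
ring.
Qed.

Lemma l2_bounded_Cthxi h M : l2_bounded h M -> l2_bounded (Cj h) M.
Proof.
by move=> hM A; under eq_bigr do rewrite /Cthxi !sqnM !sqn_expi sqnJ mul1r mulr1; exact: hM.
Qed.

Lemma inner_ev_l f n : inner (ev n) f = conjc (f n).
Proof.
rewrite /inner (csum_fset1 (n := n)) /ev ?eqxx ?mul1r // => k /negbTE ->.
by rewrite mul0r.
Qed.

Lemma inner_Cthxi_ev f n :
  inner f (Cj (ev n)) = f n * (expi (- alpha) * expi (mdot (mint_of_nat n) theta)).
Proof.
rewrite /inner (csum_fset1 (n := n)) => [|k /negbTE nk]; rewrite conj_Cthxi /ev ?eqxx ?nk.
  by rewrite mulr1.
by rewrite mulr0 mul0r mulr0.
Qed.

Lemma conj_Cthxi_toeplitz c M g Mg : phase_symmetric theta c ->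
  kbounded (ktr (toeplitz_kernel c)) M -> l2_bounded g Mg -> forall m,
  conjc (Cj (toeplitz c (Cj g)) m) = kapp (ktr (toeplitz_kernel c)) (fun n => conjc (g n)) m.
Proof.
move=> c_sym KtM gMg m; rewrite conj_Cthxi toeplitz_kapp /kapp.
have KCgS := kapp_summable KtM m (l2_bounded_Cthxi gMg).
rewrite -csumMl // -csumMr; last exact: csummableMl.
rewrite (toeplitz_kernel_tr c_sym); congr csum; apply/funext => n.
by rewrite /Cthxi -[RHS]mul1r -(expiNr alpha); ring.
Qed.

End Conjugation.

Lemma C_symmetric_toeplitz_phase_sym theta xi c :
  C_symmetric (Cthxi theta xi) (toeplitz c) -> phase_symmetric theta c.
Proof.
case=> S [[_ S_adj] CSC] k; have [p [q <-]] := msub_nat_surj k.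
have evH2 (n : I) : in_H2 (@ev R _ n) := ex_intro _ 1 (l2_bounded_ev n).
have CevH2 (n : I) : in_H2 (Cthxi theta xi (ev n)) :=
  ex_intro _ 1 (l2_bounded_Cthxi theta xi (l2_bounded_ev n)).
have := S_adj (ev q) _ (evH2 q) (CevH2 p).
rewrite inner_Cthxi_ev inner_ev_l toeplitz_kapp kapp_ev => S_pq.
have := congr1 (fun h => h q) (CSC _ (evH2 p)); rewrite /= toeplitz_kapp kapp_ev.
rewrite {1}/Cthxi -S_pq /toeplitz_kernel mopp_msub mdotB expiD => <-.
by rewrite -[LHS]mul1r -(expiNr (\sum_(j < d) xi j)); ring.
Qed.

Lemma phase_sym_C_symmetric_toeplitz theta xi c : Linfty_coeffs c ->
  phase_symmetric theta c -> C_symmetric (Cthxi theta xi) (toeplitz c).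
Proof.
move=> c_bdd c_sym; have [M [KM KtM]] := toeplitz_kbounded c_sym c_bdd.
exists (fun g => Cthxi theta xi (toeplitz c (Cthxi theta xi g))); split; first split.
- move=> g [Mg gMg]; exists (M * Mg); apply: l2_bounded_Cthxi.
  exact: kapp_l2 KM KtM _ _ (l2_bounded_Cthxi theta xi gMg).
- move=> f g [Mf fMf] [Mg gMg]; rewrite /inner (kapp_adjoint KM KtM fMf (l2_bounded_conj gMg)).
  by congr csum; apply/funext => m; rewrite (conj_Cthxi_toeplitz xi c_sym KtM gMg).
- by move=> f _; rewrite !Cthxi_invol.
Qed.

End Polydisc.

(* [hd] is unused: the characterisation holds for every [d]. *)
Theorem theorem9p6 (R : realType) (d : nat) (hd : (2 <= d)%N)
  (theta xi : 'I_d -> R) (c : mint d -> R[i]) (hc : Linfty_coeffs c) :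
  C_symmetric (Cthxi theta xi) (toeplitz c) <->
  (forall k : mint d, expi (mdot k theta) * c k = c (mopp k)).
Proof.
split; first exact: C_symmetric_toeplitz_phase_sym.
exact: phase_sym_C_symmetric_toeplitz.
Qed.
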